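(* Let $\mathbf m\in M_{(b_i);(c_j)}$, let $i\in[1,n]$, $j\in[1,n']$ and let $a\in B_i$ with $w_{\mathbf m}(a)\in C_j$. Let $\mathbf e$ be the $n\times n'$ matrix with $e_{i,j}=1$ and all other entries $0$, so that $\mathbf m-\mathbf e\in M_{(\tilde b_{i'});(\tilde c_{j'})}$ where $\tilde b_{i'}=b_{i'}-\delta_{i,i'}$, $\tilde c_{j'}=c_{j'}-\delta_{j,j'}$. Then (1) $w_{\mathbf m}^{\hat a}=w_{\mathbf m-\mathbf e}$ (the latter defined in $S_{d-1}$ with respect to the tuples $(\tilde b_{i'}),(\tilde c_{j'})$); (2) $\ell(\mathbf m)-\ell(\mathbf m-\mathbf e)$ equals each of $m_{\le i,\ge j}+m_{\ge i,\le j}-m_{i,j}-1$, $\;m_{\le i-1,\ge j}+m_{\ge i+1,\le j}+b_i-1$, and $\;m_{\le i,\ge j+1}+m_{\ge i,\le j-1}+c_j-1$.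
   Context: Let $d\ge1$ and let $(b_i)_{i\in[1,n]}$, $(c_j)_{j\in[1,n']}$ be tuples of nonnegative integers each summing to $d$. $M_{(b_i);(c_j)}$ is the set of $n\times n'$ matrices with entries in $\mathbb N$, row sums $b_i$ and column sums $c_j$. Partial sums: $m_{\le i,\ge j}=\sum_{i'\le i,\,j'\ge j}m_{i',j'}$, $m_{\ge i,\le j}=\sum_{i'\ge i,\,j'\le j}m_{i',j'}$ (empty sums are $0$). Partition $[1,d]$ into consecutive (possibly empty) intervals $B_1<\dots<B_n$ with $|B_i|=b_i$ and $C_1<\dots<C_{n'}$ with $|C_j|=c_j$. $S_d$ is the symmetric group (Coxeter generators adjacent transpositions, length $\ell$). With $S_{(b_i)},S_{(c_j)}$ the subgroups preserving each $B_i$, resp. each $C_j$, the map $\psi(w)_{i,j}=|w(B_i)\cap C_j|$ induces a bijection $S_{(c_j)}\backslash S_d/S_{(b_i)}\to M_{(b_i);(c_j)}$; $w_{\mathbf m}$ is the longest element of the double coset corresponding to $\mathbf m$, and $\ell(\mathbf m)=\ell(w_{\mathbf m})$. For $a\in[1,d]$ let $\sigma_a:[1,d]\setminus\{a\}\to[1,d-1]$ be the order-preserving bijection, and for $w\in S_d$ set $w^{\hat a}=\sigma_{w(a)}\circ w\circ\sigma_a^{-1}\in S_{d-1}$. *)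

(* Indices are 0-based: [1,n] is 'I_n, [1,d] is 'I_d. *)
From mathcomp Require Import all_boot all_order all_algebra fingroup perm.
Set Implicit Arguments. Unset Strict Implicit. Unset Printing Implicit Defensive.

Definition bstart (n : nat) (b : 'I_n -> nat) (i : 'I_n) : nat :=
  \sum_(k < n | (k < i)%N) b k.

Definition Bset (D n : nat) (b : 'I_n -> nat) (i : 'I_n) : {set 'I_D} :=
  [set x : 'I_D | (bstart b i <= x)%N && (x < bstart b i + b i)%N].

Definition inM (n n' : nat) (b : 'I_n -> nat) (c : 'I_n' -> nat)
  (m : 'M[nat]_(n, n')) : Prop :=
  (forall i, \sum_(j < n') m i j = b i) /\ (forall j, \sum_(i < n) m i j = c j).

Definition psi (D n n' : nat) (b : 'I_n -> nat) (c : 'I_n' -> nat)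
  (w : {perm 'I_D}) : 'M[nat]_(n, n') :=
  \matrix_(i < n, j < n') #|[set x in Bset D b i | w x \in Bset D c j]|.

(* Coxeter length in S_D w.r.t. adjacent transpositions = number of inversions *)
Definition ell (D : nat) (w : {perm 'I_D}) : nat :=
  #|[set p : 'I_D * 'I_D | (p.1 < p.2)%N && (w p.2 < w p.1)%N]|.

(* w is the longest element of the double coset S_(c) \ S_D / S_(b)
   corresponding to m, i.e. of the fibre psi^{-1}(m) *)
Definition longest (D n n' : nat) (b : 'I_n -> nat) (c : 'I_n' -> nat)
  (m : 'M[nat]_(n, n')) (w : {perm 'I_D}) : Prop :=
  psi b c w = m /\ forall w' : {perm 'I_D}, psi b c w' = m -> (ell w' <= ell w)%N.

(* w^{hat a} = sigma_{w a} o w o sigma_a^{-1}; sigma_a^{-1} = lift a,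
   sigma_{w a} = unlift (w a) on the complement of w a *)
Definition hatf (d : nat) (w : {perm 'I_d.+1}) (a : 'I_d.+1) (x : 'I_d) : 'I_d :=
  odflt x (unlift (w a) (w (lift a x))).

Lemma hatf_inj (d : nat) (w : {perm 'I_d.+1}) (a : 'I_d.+1) : injective (hatf w a).
Proof.
have H z : w (lift a z) = lift (w a) (hatf w a z).
  rewrite /hatf.
  have ne : w a != w (lift a z) by rewrite (inj_eq perm_inj) neq_lift.
  by case: (unlift_some ne) => k -> ->.
move=> x y Exy; apply: (@lift_inj _ a).
have E : w (lift a x) = w (lift a y) by rewrite (H x) (H y) Exy.
exact: (perm_inj E).
Qed.

Definition hat (d : nat) (w : {perm 'I_d.+1}) (a : 'I_d.+1) : {perm 'I_d} :=
  perm (@hatf_inj d w a).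

Definition msum (n n' : nat) (m : 'M[nat]_(n, n')) (P : pred 'I_n) (Q : pred 'I_n') : nat :=
  \sum_(i < n | P i) \sum_(j < n' | Q j) m i j.

Definition mminus (n n' : nat) (m : 'M[nat]_(n, n')) (i : 'I_n) (j : 'I_n') : 'M[nat]_(n, n') :=
  \matrix_(i' < n, j' < n') (m i' j' - ((i' == i) && (j' == j)))%N.

Definition tdec (n : nat) (b : 'I_n -> nat) (i : 'I_n) : 'I_n -> nat :=
  fun i' => (b i' - (i' == i))%N.

From mathcomp Require Import all_boot all_order all_algebra fingroup perm zify.
Set Implicit Arguments. Unset Strict Implicit. Unset Printing Implicit Defensive.

(* The longest element w of the fibre psi^-1(m) is decreasing on every block B_i and its
   inverse is decreasing on every block C_j: otherwise composing with an adjacent transposition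
   inside a block stays in the fibre and lengthens w. Inside a fibre these two monotonicity
   properties determine w: a counting argument fixes the block C_j containing each w x, and
   the blocks together with the monotonicity fix the relative order of all values. Deleting a
   preserves both properties and removes one point of w(B_i) ∩ C_j, so hat w a is the longest
   element of the fibre of m - e. Finally ell w - ell (hat w a) is the number of inversions
   of w involving a, and the monotonicity properties decide from the blocks of x and w x alone
   whether (x, a) is one; summing over x gives the three formulas. *)

Lemma ex_ascent (f : nat -> nat) x y : x <= y -> f x < f y ->
  exists k, [/\ x <= k, k < y & f k < f k.+1].
Proof.
elim: y => [|y IH] le_xy lt_fxy.
  by move: le_xy lt_fxy; rewrite leqn0 => /eqP->; rewrite ltnn.
have [le_xy' | lt_yx] := leqP x y; last first.
  have eq_xy : x = y.+1 by apply/eqP; rewrite eqn_leq le_xy lt_yx.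
  by rewrite eq_xy ltnn in lt_fxy.
have [lt_fy | ge_fy] := ltnP (f y) (f y.+1); first by exists y.
have [k [le_xk lt_ky lt_fk]] := IH le_xy' (leq_trans lt_fxy ge_fy).
by exists k; split; rewrite // ltnW.
Qed.

Lemma card_set_sum (T : finType) (P : pred T) : #|[set x | P x]| = \sum_x P x.
Proof. by rewrite -sum1dep_card big_mkcond; apply: eq_bigr => x _; case: (P x). Qed.

Lemma sum_ord_eq_cond n (P : pred nat) (k : nat) :
  \sum_(i < n | P i) (k == i : nat) = (k < n) && P k.
Proof.
have [lt_kn | ge_kn] := ltnP k n; last first.
  by rewrite big1 // => i _; rewrite gtn_eqF // (leq_trans (ltn_ord i)).
rewrite big_mkcond (bigD1 (Ordinal lt_kn)) //= eqxx big1 ?addn0 => [|i].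
  by case: (P k).
by rewrite -val_eqE /= eq_sym => /negbTE->; case: (P i).
Qed.

Lemma sum_ord_eq n k : \sum_(i < n) (k == i : nat) = (k < n).
Proof. by have := sum_ord_eq_cond n xpredT k; rewrite andbT. Qed.

Lemma sum_eq1 (T : finType) (a : T) : \sum_x (x == a : nat) = 1.
Proof. by rewrite (bigD1 a) //= eqxx big1 // => x /negbTE->. Qed.

Lemma sum_ltn_ord D k : k <= D -> \sum_(z < D) (z < k) = k.
Proof.
move=> le_kD; transitivity (\sum_(z < D | z < k) 1).
  by rewrite [RHS]big_mkcond; apply: eq_bigr => z _; case: (z < k).
by rewrite (big_ord_narrow le_kD) sum1_card card_ord.
Qed.

Lemma sum_lift d (a : 'I_d.+1) (F : 'I_d.+1 -> nat) :
  \sum_x F x = F a + \sum_(z < d) F (lift a z).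
Proof. exact: (bigD1_ord a (P := xpredT)). Qed.

Section Permutations.

Local Open Scope group_scope.

Lemma perm_rank D (w : {perm 'I_D}) x : w x = \sum_y (w y < w x) :> nat.
Proof.
rewrite (reindex_inj (@perm_inj _ w^-1)) /=.
by under eq_bigr do rewrite permKV; rewrite sum_ltn_ord // ltnW.
Qed.

Lemma ltn_tperm_adj D (K K' p q : 'I_D) : K' = K.+1 :> nat -> p < q ->
  ~~ ((p == K) && (q == K')) -> tperm K K' p < tperm K K' q.
Proof.
move=> eK; rewrite -!val_eqE /= eK.
case: tpermP => [/(congr1 val)|/(congr1 val)|/eqP+/eqP];
case: tpermP => [/(congr1 val)|/(congr1 val)|/eqP+/eqP];
rewrite -?val_eqE /= ?eK; lia.
Qed.

Lemma ell_swap_ascent D (w : {perm 'I_D}) (K K' : 'I_D) : K' = K.+1 :> nat ->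
  w K < w K' -> ell (tperm K K' * w) = (ell w).+1.
Proof.
move=> eK lt_wK; set s := tperm K K'.
pose f (pq : 'I_D * 'I_D) := (s pq.1, s pq.2).
have inj_f : injective f by move=> [p q] [p' q'] [/perm_inj-> /perm_inj->].
have invE : [set pq : 'I_D * 'I_D | (pq.1 < pq.2) && ((s * w)%g pq.2 < (s * w)%g pq.1)]
    = (K, K') |: f @^-1: [set pq : 'I_D * 'I_D | (pq.1 < pq.2) && (w pq.2 < w pq.1)].
  apply/setP => -[p q]; rewrite !inE /= !permM xpair_eqE.
  have [/andP[/eqP-> /eqP->] | not_KK'] := boolP ((p == K) && (q == K')).
    by rewrite /s tpermL tpermR eK ltnSn lt_wK.
  apply/andP/andP => -[lt_pq lt_w]; split=> //; first exact: ltn_tperm_adj.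
  have [/andP[/eqP sp /eqP sq] | not_sKK'] := boolP ((s p == K) && (s q == K')).
    by move: lt_w; rewrite sp sq ltnNge ltnW.
  by have := ltn_tperm_adj eK lt_pq not_sKK'; rewrite !tpermK.
rewrite /ell invE cardsU1 card_preimset // !inE /= /s tpermL tpermR eK.
by rewrite ltnNge leqW.
Qed.

Lemma ellV D (w : {perm 'I_D}) : ell w^-1 = ell w.
Proof.
pose g (pq : 'I_D * 'I_D) := (w pq.2, w pq.1).
have inj_g : injective g by move=> [p q] [p' q'] [/perm_inj-> /perm_inj->].
rewrite /ell -(card_preimset _ inj_g); apply: eq_card => -[p q].
by rewrite !inE /= !permK andbC.
Qed.

Lemma psiV D n n' (b : 'I_n -> nat) (c : 'I_n' -> nat) (w : {perm 'I_D}) :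
  psi c b w^-1 = trmx (psi b c w).
Proof.
apply/matrixP => j i; rewrite !mxE -(card_preimset _ (@perm_inj _ w)).
by apply: eq_card => x; rewrite !inE permK andbC.
Qed.

Lemma longestV D n n' (b : 'I_n -> nat) (c : 'I_n' -> nat) m (w : {perm 'I_D}) :
  longest b c m w -> longest c b (trmx m) w^-1.
Proof.
move=> [psi_w max_w]; split=> [|w' psi_w']; first by rewrite psiV psi_w.
by rewrite ellV -(ellV w') max_w // psiV psi_w' trmxK.
Qed.

Lemma ell_sum D (w : {perm 'I_D}) :
  ell w = \sum_(p : 'I_D) \sum_(q : 'I_D) ((p < q) && (w q < w p)).
Proof. by rewrite /ell card_set_sum pair_big. Qed.

Lemma hatE d (w : {perm 'I_d.+1}) a z : w (lift a z) = lift (w a) (hat w a z).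
Proof.
rewrite /hat permE /hatf.
have neq_wa : w a != w (lift a z) by rewrite (inj_eq perm_inj) neq_lift.
by case: (unlift_some neq_wa) => k -> ->.
Qed.

Lemma ltn_lift n (h : 'I_n) (x y : 'I_n.-1) : (lift h x < lift h y) = (x < y).
Proof. by rewrite /= !ltnNge leq_bump2. Qed.

Definition inv_at D (w : {perm 'I_D}) (a : 'I_D) : nat :=
  \sum_(x : 'I_D) (((a < x) && (w x < w a)) + ((x < a) && (w a < w x))).

Lemma ell_hat d (w : {perm 'I_d.+1}) a : ell w = ell (hat w a) + inv_at w a.
Proof.
rewrite !ell_sum /inv_at; under eq_bigr do rewrite (sum_lift a).
rewrite big_split /= !(sum_lift a) !ltnn /= big_split /=.
have -> : \sum_(z < d) \sum_(z' < d) ((lift a z < lift a z') && (w (lift a z') < w (lift a z)))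
          = \sum_(p < d) \sum_(q < d) ((p < q) && (hat w a q < hat w a p)).
  by apply: eq_bigr => z _; apply: eq_bigr => z' _; rewrite !hatE !ltn_lift.
by rewrite !add0n [RHS]addnC addnCA addnA.
Qed.

End Permutations.

Section Blocks.

Variables (D n : nat) (b : 'I_n -> nat).

(* The junk value n never occurs once the block sizes sum to D (block_lt). *)
Definition block (x : 'I_D) : nat := oapp (@nat_of_ord n) n [pick i | x \in Bset D b i].

Lemma bstartS (i : 'I_n) : bstart b i + b i = \sum_(k < n | k < i.+1) b k.
Proof.
rewrite /bstart [RHS](bigD1 i) ?ltnSn //= addnC; congr (_ + _).
by apply: eq_bigl => k; rewrite ltnS -val_eqE andbC -ltn_neqAle.
Qed.

Lemma bstart_leq (i i' : 'I_n) : i < i' -> bstart b i + b i <= bstart b i'.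
Proof.
move=> lt_ii'; rewrite bstartS.
by apply: (sub_le_big leqnn (fun x y => leq_addr y x)) => k /leq_trans; apply.
Qed.

Lemma Bset_ltn (i i' : 'I_n) (x y : 'I_D) :
  x \in Bset D b i -> y \in Bset D b i' -> i < i' -> x < y.
Proof. by rewrite !inE => /andP[_ ?] /andP[? _] /bstart_leq; lia. Qed.

Hypothesis sum_b : \sum_(k < n) b k = D.

Lemma Bset_cover (x : 'I_D) : exists i, x \in Bset D b i.
Proof.
pose f k : nat := x < \sum_(i < n | i < k) b i.
have f0 : f 0 = 0 by rewrite /f big_pred0.
have fn : f n = 1 by rewrite /f (eq_bigl xpredT) ?sum_b ?ltn_ord // => i; rewrite ltn_ord.
have [|k [_ lt_kn ascent_k]] := @ex_ascent f 0 n (leq0n n); first by rewrite f0 fn.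
exists (Ordinal lt_kn); rewrite inE bstartS /bstart.
move: ascent_k; rewrite /f.
set s := \sum_(i < n | i < k) b i; set s' := \sum_(i < n | i < k.+1) b i.
by case: (ltnP x s); case: (ltnP x s').
Qed.

Lemma mem_Bset (x : 'I_D) (i : 'I_n) : (x \in Bset D b i) = (block x == i).
Proof.
rewrite /block; case: pickP => [i' x_i' | /= noB]; last first.
  by have [i0 x_i0] := Bset_cover x; move: (noB i0); rewrite /= x_i0.
apply/idP/eqP => [x_i | /val_inj <- //].
by case: (ltngtP i' i) => [/(Bset_ltn x_i' x_i) | /(Bset_ltn x_i x_i') |]; rewrite ?ltnn.
Qed.

Lemma block_Bset (x : 'I_D) (i : 'I_n) : x \in Bset D b i -> block x = i.
Proof. by rewrite mem_Bset => /eqP. Qed.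

Lemma block_lt (x : 'I_D) : block x < n.
Proof. by have [i /block_Bset->] := Bset_cover x. Qed.

Lemma block_ltn (x y : 'I_D) : block x < block y -> x < y.
Proof.
by apply: (@Bset_ltn (Ordinal (block_lt x)) (Ordinal (block_lt y))); rewrite mem_Bset.
Qed.

Lemma block_homo : {homo block : x y / x <= y}.
Proof.
by move=> x y le_xy; rewrite leqNgt; apply: contraL le_xy => /block_ltn; rewrite -ltnNge.
Qed.

End Blocks.

Section Fibres.

Variables (D n n' : nat) (b : 'I_n -> nat) (c : 'I_n' -> nat).
Hypotheses (sum_b : \sum_(k < n) b k = D) (sum_c : \sum_(k < n') c k = D).

Lemma psiE (w : {perm 'I_D}) i j :
  psi b c w i j = \sum_x ((block b x == i) && (block c (w x) == j)).
Proof.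
rewrite mxE -card_set_sum; apply: eq_card => x.
by rewrite [in RHS]inE -(mem_Bset sum_b) -(mem_Bset sum_c) !inE.
Qed.

Lemma msum_psi (w : {perm 'I_D}) (P Q : pred nat) :
  msum (psi b c w) (fun i => P i) (fun j => Q j)
  = \sum_x (P (block b x) && Q (block c (w x))).
Proof.
rewrite /msum (eq_bigr _ (fun i _ => eq_bigr _ (fun j _ => psiE w i j))).
under eq_bigr do rewrite exchange_big.
rewrite exchange_big; apply: eq_bigr => x _.
under eq_bigr do under eq_bigr do rewrite -mulnb.
by rewrite -big_distrlr /= !sum_ord_eq_cond !block_lt ?mulnb.
Qed.

Lemma psi_row_sum (w : {perm 'I_D}) i :
  \sum_(j < n') psi b c w i j = \sum_(x : 'I_D) (block b x == i).
Proof.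
have := msum_psi w (pred1 (i : nat)) xpredT.
rewrite /msum (big_pred1 i) => [->|i' /=]; last by rewrite val_eqE.
by under eq_bigr do rewrite andbT.
Qed.

Lemma psi_col_sum (w : {perm 'I_D}) j :
  \sum_(i < n) psi b c w i j = \sum_(x : 'I_D) (block c (w x) == j).
Proof.
have := msum_psi w xpredT (pred1 (j : nat)).
by rewrite /msum exchange_big (big_pred1 j) => [->|j' /=] //; rewrite val_eqE.
Qed.

End Fibres.

Definition blockwise_decreasing D n n' (b : 'I_n -> nat) (c : 'I_n' -> nat)
    (w : {perm 'I_D}) : Prop :=
  forall x y : 'I_D, x < y ->
    block b x = block b y \/ block c (w x) = block c (w y) -> w y < w x.

Section LongestDecreasing.

Variables (D n n' : nat) (b : 'I_n -> nat) (c : 'I_n' -> nat).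
Hypotheses (sum_b : \sum_(k < n) b k = D) (sum_c : \sum_(k < n') c k = D).

Local Open Scope group_scope.

Lemma psi_tperm_block (w : {perm 'I_D}) (K K' : 'I_D) :
  block b K = block b K' -> psi b c (tperm K K' * w) = psi b c w.
Proof.
move=> bK; apply/matrixP => i j; rewrite !psiE //.
rewrite (reindex_inj (@perm_inj _ (tperm K K'))); apply: eq_bigr => x _.
by rewrite permM tpermK; case: tpermP => [->|->|] //; rewrite bK.
Qed.

Lemma longest_decreasing m (w : {perm 'I_D}) : longest b c m w ->
  forall x y : 'I_D, x < y -> block b x = block b y -> w y < w x.
Proof.
move=> [psi_w max_w] x y lt_xy bxy; rewrite ltnNge; apply/negP => le_wxy.
have lt_wxy : w x < w y.
  by rewrite ltn_neqAle le_wxy andbT val_eqE (inj_eq perm_inj) -val_eqE neq_ltn lt_xy.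
pose f k := val (w (insubd x k)).
have [|k [le_xk lt_ky lt_fk]] := @ex_ascent f x y (ltnW lt_xy); first by rewrite /f !valKd.
have lt_kD : k < D by rewrite (ltn_trans lt_ky).
have lt_k1D : k.+1 < D by rewrite (leq_ltn_trans lt_ky).
pose K := Ordinal lt_kD; pose K' := Ordinal lt_k1D.
have bK : block b K = block b K'.
  have := @block_homo _ _ _ sum_b x K le_xk.
  have := @block_homo _ _ _ sum_b K K' (leqnSn k).
  have := @block_homo _ _ _ sum_b K' y lt_ky; lia.
have lt_wK : w K < w K'.
  have insubdE k' (lt_k'D : k' < D) : insubd x k' = Ordinal lt_k'D.
    by apply: val_inj; rewrite val_insubd lt_k'D.
  by move: lt_fk; rewrite /f !insubdE.
have := max_w (tperm K K' * w) (etrans (psi_tperm_block w bK) psi_w).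
by apply/negP; rewrite -ltnNge ell_swap_ascent.
Qed.

End LongestDecreasing.

Lemma longest_blockwise_decreasing D n n' (b : 'I_n -> nat) (c : 'I_n' -> nat)
    m (w : {perm 'I_D}) :
  \sum_(k < n) b k = D -> \sum_(k < n') c k = D ->
  longest b c m w -> blockwise_decreasing b c w.
Proof.
move=> sum_b sum_c Lw x y lt_xy [bxy | cxy].
  exact: (longest_decreasing sum_b sum_c Lw lt_xy bxy).
rewrite ltnNge leq_eqVlt negb_or val_eqE (inj_eq perm_inj) -val_eqE neq_ltn lt_xy /=.
apply/negP => lt_wxy.
have := longest_decreasing sum_c sum_b (longestV Lw) lt_wxy cxy.
by rewrite !permK ltnNge ltnW.
Qed.

Section Uniqueness.

Variables (D n n' : nat) (b : 'I_n -> nat) (c : 'I_n' -> nat).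
Hypotheses (sum_b : \sum_(k < n) b k = D) (sum_c : \sum_(k < n') c k = D).

Lemma blockC_antitone (w : {perm 'I_D}) (x y : 'I_D) :
  blockwise_decreasing b c w -> x < y -> block b x = block b y ->
  block c (w y) <= block c (w x).
Proof. by move=> dec_w lt_xy bxy; apply/block_homo/ltnW/dec_w => //; left. Qed.

Lemma ltn_perm_blockC (w : {perm 'I_D}) (x y : 'I_D) :
  blockwise_decreasing b c w -> x != y ->
  (w y < w x) = (block c (w y) < block c (w x))
                || (block c (w y) == block c (w x)) && (x < y).
Proof.
move=> dec_w neq_xy; apply/idP/idP => [lt_wyx | /orP[lt_cyx | /andP[/eqP cyx lt_xy]]].
- have := block_homo sum_c (ltnW lt_wyx); rewrite leq_eqVlt => /orP[/eqP cyx | -> //].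
  rewrite cyx eqxx ltnn /= ltn_neqAle val_eqE neq_xy leqNgt; apply/negP => lt_yx.
  by have := dec_w _ _ lt_yx (or_intror cyx); rewrite ltnNge ltnW.
- by rewrite ltnNge; apply: contraL lt_cyx => /(block_homo sum_c); rewrite leqNgt.
- exact: dec_w _ _ lt_xy (or_intror (esym cyx)).
Qed.

Lemma blockC_le (w1 w2 : {perm 'I_D}) :
  blockwise_decreasing b c w1 -> blockwise_decreasing b c w2 ->
  psi b c w1 = psi b c w2 -> forall x, block c (w2 x) <= block c (w1 x).
Proof.
move=> dec1 dec2 psi12 x; rewrite leqNgt; apply/negP => lt_x.
set i := block b x; set j := block c (w2 x).
pose S (v : {perm 'I_D}) := [set y | (block b y == i) && (j <= block c (v y))].
have card_S : #|S w1| = #|S w2|.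
  by rewrite !card_set_sum -!(msum_psi sum_b sum_c _ (pred1 i) (leq j)) psi12.
have /subsetPn[y] : ~~ (S w1 \subset S w2).
  apply/negP => sub12; have /eqP eqS : S w1 == S w2.
    by rewrite eqEcard sub12 card_S /=.
  have : x \in S w2 by rewrite inE eqxx leqnn.
  by rewrite -eqS inE eqxx leqNgt lt_x.
rewrite !inE => /andP[/eqP byi le_j1]; rewrite byi eqxx -ltnNge => lt_2j.
case: (ltngtP x y) => [lt_xy | lt_yx | /val_inj exy].
- have := blockC_antitone dec1 lt_xy (esym byi).
  by rewrite leqNgt (leq_trans lt_x le_j1).
- have := blockC_antitone dec2 lt_yx byi.
  by rewrite leqNgt lt_2j.
- by move: le_j1; rewrite -exy leqNgt lt_x.
Qed.

Lemma blockwise_decreasing_inj (w1 w2 : {perm 'I_D}) :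
  blockwise_decreasing b c w1 -> blockwise_decreasing b c w2 ->
  psi b c w1 = psi b c w2 -> w1 = w2.
Proof.
move=> dec1 dec2 psi12.
have cE z : block c (w1 z) = block c (w2 z).
  by apply/eqP; rewrite eqn_leq !(blockC_le dec1 dec2, blockC_le dec2 dec1).
apply/permP => x; apply: val_inj; rewrite /= (perm_rank w1) (perm_rank w2).
apply: eq_bigr => y _; have [->|neq_xy] := eqVneq x y; first by rewrite !ltnn.
by rewrite !ltn_perm_blockC // !cE.
Qed.

End Uniqueness.

Section Deletion.

Variables (d n : nat) (b : 'I_n -> nat) (i : 'I_n) (a : 'I_d.+1).
Hypotheses (sum_b : \sum_(k < n) b k = d.+1) (a_Bi : a \in Bset d.+1 b i).

Lemma Bset_size_gt0 : 0 < b i.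
Proof. by move: a_Bi; rewrite inE; lia. Qed.

Lemma tdecK k : tdec b i k + (i == k :> nat) = b k.
Proof.
rewrite /tdec val_eqE.
by have [->|_] := eqVneq k i; rewrite ?subnK ?Bset_size_gt0 ?subn0 ?addn0.
Qed.

Lemma sum_tdec : \sum_(k < n) tdec b i k = d.
Proof.
apply/eqP; rewrite -eqSS -sum_b -(eq_bigr _ (fun k _ => tdecK k)) big_split /=.
by rewrite sum_ord_eq ltn_ord addn1.
Qed.

Lemma bstart_tdec k : bstart (tdec b i) k = bstart b k - (i < k).
Proof.
rewrite /bstart -[in RHS](eq_bigr _ (fun k _ => tdecK k)) big_split /=.
by rewrite (sum_ord_eq_cond _ (fun x => x < k)) ltn_ord addnK.
Qed.

Lemma mem_Bset_tdec k (z : 'I_d) :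
  (z \in Bset d (tdec b i) k) = (lift a z \in Bset d.+1 b k).
Proof.
move: a_Bi; rewrite !inE bstart_tdec /tdec /= /bump -val_eqE /= => a_B.
case: (ltngtP k i) => [/(bstart_leq b) le_ki | /(bstart_leq b) le_ik | /val_inj->];
  case: (leqP a z) => le_az; rewrite /= ?subn0 ?add0n ?add1n;
  apply/andP/andP => -[]; lia.
Qed.

Lemma block_tdec (z : 'I_d) : block (tdec b i) z = block b (lift a z).
Proof.
have := mem_Bset_tdec (Ordinal (block_lt sum_tdec z)) z.
by rewrite (mem_Bset sum_tdec) (mem_Bset sum_b) eqxx => /esym/eqP.
Qed.

End Deletion.

(* x, a are positions with images wx, wa; I, i are the blocks of x, a and J, j those of wx, wa. *)
Lemma quadrant_indicator_cases (x a wx wa I J i j : nat) :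
  x != a -> wx != wa ->
  (I < i) ==> (x < a) -> (i < I) ==> (a < x) ->
  (I == i) ==> (x < a) ==> (wa < wx) -> (I == i) ==> (a < x) ==> (wx < wa) ->
  (J < j) ==> (wx < wa) -> (j < J) ==> (wa < wx) ->
  (J == j) ==> (x < a) ==> (wa < wx) -> (J == j) ==> (a < x) ==> (wx < wa) ->
  let inv := ((a < x) && (wx < wa)) + ((x < a) && (wa < wx)) in
  [/\ ((I <= i) && (j <= J)) + ((i <= I) && (J <= j)) = inv + ((I == i) && (J == j)),
      ((I < i) && (j <= J)) + ((i < I) && (J <= j)) + (I == i) = inv
    & ((I <= i) && (j < J)) + ((i <= I) && (J < j)) + (J == j) = inv].
Proof.
by case: (ltngtP x a) => //; case: (ltngtP wx wa) => //;
   case: (ltngtP I i) => //; case: (ltngtP J j).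
Qed.

Section Hat.

Variables (d n n' : nat) (b : 'I_n -> nat) (c : 'I_n' -> nat).
Variables (i : 'I_n) (j : 'I_n') (a : 'I_d.+1) (w : {perm 'I_d.+1}).
Hypotheses (sum_b : \sum_(k < n) b k = d.+1) (sum_c : \sum_(k < n') c k = d.+1).
Hypotheses (a_Bi : a \in Bset d.+1 b i) (wa_Cj : w a \in Bset d.+1 c j).

Lemma hat_blockwise_decreasing :
  blockwise_decreasing b c w -> blockwise_decreasing (tdec b i) (tdec c j) (hat w a).
Proof.
move=> dec_w z1 z2 lt_z; rewrite !(block_tdec sum_b a_Bi) !(block_tdec sum_c wa_Cj) -!hatE.
by move/(dec_w _ _ (etrans (ltn_lift a z1 z2) lt_z)); rewrite !hatE ltn_lift.
Qed.

Lemma psi_hat :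
  psi (tdec b i) (tdec c j) (hat w a) = mminus (psi b c w) i j.
Proof.
have sum_b' := sum_tdec sum_b a_Bi; have sum_c' := sum_tdec sum_c wa_Cj.
apply/matrixP => k l; rewrite [RHS]mxE !psiE // (sum_lift a).
rewrite (block_Bset sum_b a_Bi) (block_Bset sum_c wa_Cj) !val_eqE.
rewrite ![_ == k]eq_sym ![_ == l]eq_sym addKn; apply: eq_bigr => z _.
by rewrite (block_tdec sum_b a_Bi) (block_tdec sum_c wa_Cj) -hatE.
Qed.

Lemma hat_longest m (w' : {perm 'I_d}) :
  longest b c m w -> longest (tdec b i) (tdec c j) (mminus m i j) w' -> hat w a = w'.
Proof.
move=> Lw Lw'; have sum_b' := sum_tdec sum_b a_Bi; have sum_c' := sum_tdec sum_c wa_Cj.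
apply: (blockwise_decreasing_inj sum_b' sum_c').
- exact/hat_blockwise_decreasing/(longest_blockwise_decreasing sum_b sum_c Lw).
- exact: (longest_blockwise_decreasing sum_b' sum_c' Lw').
- by rewrite psi_hat Lw.1 Lw'.1.
Qed.

Hypothesis dec_w : blockwise_decreasing b c w.

Lemma quadrant_indicators (x : 'I_d.+1) :
  let I := block b x in let J := block c (w x) in
  let inv := ((a < x) && (w x < w a)) + ((x < a) && (w a < w x)) in
  [/\ ((I <= i) && (j <= J)) + ((i <= I) && (J <= j))
        = inv + ((I == i) && (J == j)) + (x == a),
      ((I < i) && (j <= J)) + ((i < I) && (J <= j)) + (I == i) = inv + (x == a)
    & ((I <= i) && (j < J)) + ((i <= I) && (J < j)) + (J == j) = inv + (x == a)].
Proof.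
have ba := block_Bset sum_b a_Bi; have cwa := block_Bset sum_c wa_Cj.
have [->|neq_xa] := eqVneq x a => /=; first by rewrite ba cwa !ltnn !leqnn !eqxx.
rewrite !addn0 -ba -cwa; apply: quadrant_indicator_cases.
- by rewrite val_eqE.
- by rewrite val_eqE (inj_eq perm_inj).
- exact/implyP/block_ltn.
- exact/implyP/block_ltn.
- by apply/implyP => /eqP bxa; apply/implyP => lt_xa; apply: dec_w lt_xa _; left.
- by apply/implyP => /eqP bxa; apply/implyP => lt_ax; apply: dec_w lt_ax _; left.
- exact/implyP/block_ltn.
- exact/implyP/block_ltn.
- by apply/implyP => /eqP cxa; apply/implyP => lt_xa; apply: dec_w lt_xa _; right.
- by apply/implyP => /eqP cxa; apply/implyP => lt_ax; apply: dec_w lt_ax _; right.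
Qed.

Lemma ell_hat_quadrants (m := psi b c w) :
  [/\ ell w + m i j + 1 = ell (hat w a)
        + msum m (fun i' => i' <= i) (fun j' => j <= j')
        + msum m (fun i' => i <= i') (fun j' => j' <= j),
      ell w + 1 = ell (hat w a)
        + msum m (fun i' => i' < i) (fun j' => j <= j')
        + msum m (fun i' => i < i') (fun j' => j' <= j) + \sum_(j' < n') m i j'
    & ell w + 1 = ell (hat w a)
        + msum m (fun i' => i' <= i) (fun j' => j < j')
        + msum m (fun i' => i <= i') (fun j' => j' < j) + \sum_(i' < n) m i' j].
Proof.
have msumE := msum_psi sum_b sum_c w.
rewrite /m (ell_hat w a) psiE // psi_row_sum // psi_col_sum //.
rewrite (msumE (fun k => k <= i) (fun k => j <= k)) (msumE (fun k => i <= k) (fun k => k <= j)).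
rewrite (msumE (fun k => k < i) (fun k => j <= k)) (msumE (fun k => i < k) (fun k => k <= j)).
rewrite (msumE (fun k => k <= i) (fun k => j < k)) (msumE (fun k => i <= k) (fun k => k < j)).
rewrite /inv_at -(sum_eq1 a) -!addnA -!big_split /=.
split; congr (_ + _); apply: eq_bigr => x _; have [e1 e2 e3] := quadrant_indicators x.
- by rewrite e1 addnA.
- by rewrite addnA e2.
- by rewrite addnA e3.
Qed.

End Hat.

Unset Implicit Arguments.
Local Open Scope ring_scope.

Theorem proposition2p7 (d n n' : nat) (b : 'I_n -> nat) (c : 'I_n' -> nat)
  (m : 'M[nat]_(n, n')) (i : 'I_n) (j : 'I_n') (a : 'I_d.+1)
  (w : {perm 'I_d.+1}) (w' : {perm 'I_d}) :
  (\sum_(k < n) b k)%N = d.+1 ->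
  (\sum_(k < n') c k)%N = d.+1 ->
  inM b c m ->
  longest b c m w ->
  a \in Bset d.+1 b i ->
  w a \in Bset d.+1 c j ->
  longest (tdec b i) (tdec c j) (mminus m i j) w' ->
  hat w a = w' /\
  [/\ (ell w)%:Z - (ell w')%:Z =
        (msum m (fun i' => (i' <= i)%N) (fun j' => (j <= j')%N))%:Z
        + (msum m (fun i' => (i <= i')%N) (fun j' => (j' <= j)%N))%:Z
        - (m i j)%:Z - 1,
      (ell w)%:Z - (ell w')%:Z =
        (msum m (fun i' => (i' < i)%N) (fun j' => (j <= j')%N))%:Z
        + (msum m (fun i' => (i < i')%N) (fun j' => (j' <= j)%N))%:Z
        + (b i)%:Z - 1
    & (ell w)%:Z - (ell w')%:Z =
        (msum m (fun i' => (i' <= i)%N) (fun j' => (j < j')%N))%:Z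
        + (msum m (fun i' => (i <= i')%N) (fun j' => (j' < j)%N))%:Z
        + (c j)%:Z - 1].
Proof.
move=> sum_b sum_c [rows cols] Lw a_Bi wa_Cj Lw'.
have hat_w := hat_longest sum_b sum_c a_Bi wa_Cj Lw Lw'.
have dec_w := longest_blockwise_decreasing sum_b sum_c Lw.
have [e1 e2 e3] := ell_hat_quadrants sum_b sum_c a_Bi wa_Cj dec_w.
split=> //; rewrite Lw.1 rows cols hat_w in e1 e2 e3; split; lia.
Qed.
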